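(* Let $F$ be the field with two elements and $R$ the ring of all functions $\mathbb{N}\to F$ with pointwise operations. Let $I\subseteq R$ be the ideal of all finitely supported functions, and let $M$ be any maximal proper ideal of $R$ with $I\subseteq M$. Then $E=M$ is a set of local units for the ring $M$, but $M$ does not have enough idempotents.
   Context: For $a,b$ in a ring put $a\vee b=a+b-ab$. A set of local units for a ring $S$ is a set $E\subseteq S$ of pairwise commuting idempotents, closed under $\vee$, such that for every $s\in S$ there is $e\in E$ with $es=se=s$. A ring $S$ has enough idempotents if there is a set $\{e_i\}_{i\in I}$ of pairwise orthogonal idempotents in $S$ (i.e. $e_i^2=e_i$ and $e_ie_j=e_je_i=0$ for $i\neq j$) such that $S=\bigoplus_{i\in I} Se_i=\bigoplus_{i\in I} e_iS$. *)

(* F = bool (the field with two elements: xorb = +, andb = * ). *)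
From Stdlib Require Import List Arith.
Import ListNotations.

Definition R := nat -> bool.
Definition r0 : R := fun _ => false.
Definition r1 : R := fun _ => true.
Definition radd (f g : R) : R := fun n => xorb (f n) (g n).
Definition ropp (f : R) : R := fun n => f n.   (* -x = x in characteristic 2 *)
Definition rmul (f g : R) : R := fun n => andb (f n) (g n).

Definition rvee (a b : R) : R := radd (radd a b) (ropp (rmul a b)).

Definition is_ideal (J : R -> Prop) : Prop :=
  J r0 /\
  (forall x y, J x -> J y -> J (radd x y)) /\
  (forall x, J x -> J (ropp x)) /\
  (forall r x, J x -> J (rmul r x) /\ J (rmul x r)).

Definition proper_ideal (J : R -> Prop) : Prop := is_ideal J /\ ~ J r1.

Definition maximal_ideal (J : R -> Prop) : Prop :=
  proper_ideal J /\
  forall J' : R -> Prop, proper_ideal J' -> (forall x, J x -> J' x) ->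
    forall x, J' x -> J x.

Definition finsupp (f : R) : Prop := exists N, forall n, N <= n -> f n = false.

Definition local_units (S E : R -> Prop) : Prop :=
  (forall e, E e -> S e) /\
  (forall e f, E e -> E f -> rmul e f = rmul f e) /\
  (forall e, E e -> rmul e e = e) /\
  (forall e f, E e -> E f -> E (rvee e f)) /\
  (forall s, S s -> exists e, E e /\ rmul e s = s /\ rmul s e = s).

Definition rsum {Idx : Type} (l : list Idx) (a : Idx -> R) : R :=
  fold_right radd r0 (map a l).

Definition internal_direct_sum {Idx : Type} (S : R -> Prop) (P : Idx -> R -> Prop) : Prop :=
  (forall i x, P i x -> S x) /\
  (forall s, S s -> exists (l : list Idx) (a : Idx -> R),
       NoDup l /\ (forall i, In i l -> P i (a i)) /\ s = rsum l a) /\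
  (forall (l : list Idx) (a : Idx -> R),
       NoDup l -> (forall i, In i l -> P i (a i)) -> rsum l a = r0 ->
       forall i, In i l -> a i = r0).

Definition left_mult_set (S : R -> Prop) (e : R) : R -> Prop :=
  fun x => exists s, S s /\ x = rmul s e.
Definition right_mult_set (S : R -> Prop) (e : R) : R -> Prop :=
  fun x => exists s, S s /\ x = rmul e s.

Definition enough_idempotents (S : R -> Prop) : Prop :=
  exists (Idx : Type) (e : Idx -> R),
    (forall i, S (e i)) /\
    (forall i, rmul (e i) (e i) = e i) /\
    (forall i j, i <> j -> rmul (e i) (e j) = r0 /\ rmul (e j) (e i) = r0) /\
    internal_direct_sum S (fun i => left_mult_set S (e i)) /\
    internal_direct_sum S (fun i => right_mult_set S (e i)).

From Stdlib Require Import List Arith.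
From Stdlib Require Import Classical ClassicalEpsilon FunctionalExtensionality Lia Bool.

(* In R every element is idempotent, so M is its own set of local units.
   Suppose M had enough idempotents (e_i). Orthogonality makes their supports
   pairwise disjoint, and the direct sum decomposition puts every element of M
   below a finite union of supports. Pick a transversal A of the supports
   (together with all points outside them): A meets each support at most once,
   so every element of M meets A in a finite set. A is not in M (otherwise 1
   would lie below finitely many supports), so A is infinite since M contains
   the finitely supported functions. Split A into two infinite halves f and
   A \ f. A maximal ideal of a Boolean ring is prime, so f or 1 + f lies in M,
   yet both meet A infinitely often. *)

Ltac pointwise :=
  apply functional_extensionality; intro;
  unfold r0, r1, radd, ropp, rmul, rvee;
  repeat match goal with
         | |- context [?g ?n] => is_var g; destruct (g n)
         end; reflexivity.

Lemma rvee_orb (f g : R) n : rvee f g n = f n || g n.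
Proof. unfold rvee, radd, ropp, rmul; destruct (f n), (g n); reflexivity. Qed.

Lemma ideal_rvee (J : R -> Prop) x y :
  is_ideal J -> J x -> J y -> J (rvee x y).
Proof.
  intros [_ [J_add [J_opp J_mul]]] Jx Jy.
  apply J_add; [apply J_add; assumption | apply J_opp, (proj1 (J_mul x y Jy))].
Qed.

Lemma ideal_below (J : R -> Prop) x y :
  is_ideal J -> J y -> (forall n, x n = true -> y n = true) -> J x.
Proof.
  intros [_ [_ [_ J_mul]]] Jy x_le_y.
  replace x with (rmul x y); [exact (proj1 (J_mul x y Jy))|].
  apply functional_extensionality; intro n; unfold rmul.
  specialize (x_le_y n); destruct (x n), (y n); auto.
Qed.

Lemma local_units_self (M : R -> Prop) : is_ideal M -> local_units M M.
Proof.
  intros M_ideal; repeat split; auto.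
  - intros e f _ _; pointwise.
  - intros e _; pointwise.
  - intros e f Me Mf; apply ideal_rvee; assumption.
  - intros s Ms; exists s; repeat split; auto; pointwise.
Qed.

(* The witness ideal is {x | x (1 + f) \in M}: it contains M and f. *)
Lemma maximal_ideal_prime (M : R -> Prop) f :
  maximal_ideal M -> M f \/ M (radd r1 f).
Proof.
  intros [[M_ideal _] M_max].
  pose proof M_ideal as [M0 [M_add [_ M_mul]]].
  set (J := fun x => M (rmul x (radd r1 f))).
  destruct (classic (J r1)) as [J1 | not_J1].
  - right; unfold J in J1; replace (radd r1 f) with (rmul r1 (radd r1 f)) by pointwise.
    exact J1.
  - left; apply (M_max J).
    + split; [|exact not_J1]; unfold J; split; [|split; [|split]].
      * replace (rmul r0 (radd r1 f)) with r0 by pointwise; exact M0.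
      * intros x y Jx Jy.
        replace (rmul (radd x y) (radd r1 f))
          with (radd (rmul x (radd r1 f)) (rmul y (radd r1 f))) by pointwise.
        apply M_add; assumption.
      * intros x Jx; exact Jx.
      * intros r x Jx; split.
        -- replace (rmul (rmul r x) (radd r1 f))
             with (rmul r (rmul x (radd r1 f))) by pointwise; exact (proj1 (M_mul r _ Jx)).
        -- replace (rmul (rmul x r) (radd r1 f))
             with (rmul (rmul x (radd r1 f)) r) by pointwise; exact (proj2 (M_mul r _ Jx)).
    + intros x Mx; exact (proj2 (M_mul _ x Mx)).
    + unfold J; replace (rmul f (radd r1 f)) with r0 by pointwise; exact M0.
Qed.

Lemma finsupp_below (f g : R) :
  finsupp g -> (forall n, f n = true -> g n = true) -> finsupp f.
Proof.
  intros [N HN] f_le_g; exists N; intros n Hn.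
  specialize (f_le_g n); specialize (HN n Hn); destruct (f n), (g n); intuition.
Qed.

Lemma finsupp_orb (f g : R) :
  finsupp f -> finsupp g -> finsupp (fun n => f n || g n).
Proof.
  intros [N HN] [K HK]; exists (max N K); intros n Hn.
  rewrite HN, HK by lia; reflexivity.
Qed.

Lemma finsupp_at_most_one (f : R) :
  (forall n m, f n = true -> f m = true -> n = m) -> finsupp f.
Proof.
  intros f_one; destruct (classic (exists p, f p = true)) as [[p fp] | no_p].
  - exists (S p); intros n Hn; destruct (f n) eqn:fn; auto.
    rewrite (f_one n p fn fp) in Hn; lia.
  - exists 0; intros n _; destruct (f n) eqn:fn; auto.
    exfalso; apply no_p; exists n; exact fn.
Qed.

Lemma not_finsupp_unbounded (a : R) :
  ~ finsupp a -> forall N, exists n, N <= n /\ a n = true.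
Proof.
  intros a_inf N; apply NNPP; intro none; apply a_inf; exists N; intros n Hn.
  destruct (a n) eqn:an; auto; exfalso; apply none; exists n; auto.
Qed.

Fixpoint count_upto (a : R) (n : nat) : nat :=
  match n with
  | 0 => 0
  | S k => count_upto a k + (if a k then 1 else 0)
  end.

Lemma count_upto_mono (a : R) n k : n <= k -> count_upto a n <= count_upto a k.
Proof. induction 1; simpl; [|destruct (a m)]; lia. Qed.

Lemma count_upto_hits (a : R) N v K :
  count_upto a N <= v < count_upto a K ->
  exists n, N <= n /\ a n = true /\ count_upto a n = v.
Proof.
  induction K as [|K IH]; simpl; intros Hv; [lia|].
  destruct (Nat.lt_ge_cases v (count_upto a K)) as [lt | ge]; [apply IH; lia|].
  destruct (a K) eqn:aK; [|lia].
  exists K; repeat split; auto; [|lia].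
  destruct (Nat.le_gt_cases N K) as [le | gt]; auto.
  pose proof (count_upto_mono a (S K) N gt) as mono; simpl in mono; rewrite aK in mono; lia.
Qed.

Lemma count_upto_unbounded (a : R) :
  ~ finsupp a -> forall v, exists K, v < count_upto a K.
Proof.
  intros a_inf v; induction v as [|v [K HK]].
  - destruct (not_finsupp_unbounded a a_inf 0) as [n [_ an]].
    exists (S n); simpl; rewrite an; lia.
  - destruct (not_finsupp_unbounded a a_inf K) as [n [Kn an]].
    exists (S n); simpl; rewrite an; pose proof (count_upto_mono a K n Kn); lia.
Qed.

Lemma count_upto_parity (a : R) :
  ~ finsupp a ->
  forall N b, exists n, N <= n /\ a n = true /\ Nat.even (count_upto a n) = b.
Proof.
  intros a_inf N b.
  assert (exists v, count_upto a N <= v /\ Nat.even v = b) as [v [Nv v_b]].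
  { destruct (Nat.even (count_upto a N)) eqn:par.
    - destruct b; [exists (count_upto a N) | exists (S (count_upto a N))];
        rewrite ?Nat.even_succ, <- ?Nat.negb_even, ?par; auto.
    - destruct b; [exists (S (count_upto a N)) | exists (count_upto a N)];
        rewrite ?Nat.even_succ, <- ?Nat.negb_even, ?par; auto. }
  destruct (count_upto_unbounded a a_inf v) as [K HK].
  destruct (count_upto_hits a N v K) as [n [Nn [an cn]]]; [lia|].
  exists n; rewrite cn; auto.
Qed.

(* Alternate along a: every other point of a goes to f. *)
Lemma split_infinite (a : R) :
  ~ finsupp a -> exists f, ~ finsupp (rmul f a) /\ ~ finsupp (rmul (radd r1 f) a).
Proof.
  intros a_inf; exists (fun n => Nat.even (count_upto a n)); split;
    intros [N HN]; [destruct (count_upto_parity a a_inf N true) as [n [Nn [an cn]]]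
                   |destruct (count_upto_parity a a_inf N false) as [n [Nn [an cn]]]];
    specialize (HN n Nn); unfold rmul, radd, r1 in HN; rewrite an, cn in HN; discriminate.
Qed.

Definition cover {Idx : Type} (e : Idx -> R) (l : list Idx) : R :=
  fun n => existsb (fun i => e i n) l.

Lemma cover_spec {Idx : Type} (e : Idx -> R) l n :
  cover e l n = true <-> exists i, In i l /\ e i n = true.
Proof. apply existsb_exists. Qed.

Lemma ideal_cover (J : R -> Prop) {Idx : Type} (e : Idx -> R) :
  is_ideal J -> (forall i, J (e i)) -> forall l, J (cover e l).
Proof.
  intros J_ideal Je l; induction l as [|i l IH].
  - replace (cover e nil) with r0 by pointwise; exact (proj1 J_ideal).
  - replace (cover e (i :: l)) with (rvee (e i) (cover e l)).
    + apply ideal_rvee; auto.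
    + apply functional_extensionality; intro n; apply rvee_orb.
Qed.

Lemma rsum_true {Idx : Type} (l : list Idx) (a : Idx -> R) n :
  rsum l a n = true -> exists i, In i l /\ a i n = true.
Proof.
  induction l as [|i l IH]; [discriminate|].
  unfold rsum; simpl; unfold radd; destruct (a i n) eqn:ain; intros H.
  - exists i; auto.
  - destruct (IH H) as [j [jl ajn]]; exists j; auto.
Qed.

Lemma orthogonal_disjoint {Idx : Type} (e : Idx -> R) :
  (forall i j, i <> j -> rmul (e i) (e j) = r0 /\ rmul (e j) (e i) = r0) ->
  forall i j n, e i n = true -> e j n = true -> i = j.
Proof.
  intros e_orth i j n ein ejn; apply NNPP; intro ij.
  pose proof (f_equal (fun g => g n) (proj1 (e_orth i j ij))) as E.
  unfold rmul, r0 in E; simpl in E; rewrite ein, ejn in E; discriminate.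
Qed.

Lemma left_direct_sum_below_cover (S : R -> Prop) {Idx : Type} (e : Idx -> R) :
  internal_direct_sum S (fun i => left_mult_set S (e i)) ->
  forall s, S s -> exists l, forall n, s n = true -> cover e l n = true.
Proof.
  intros [_ [decomp _]] s Ss; destruct (decomp s Ss) as [l [a [_ [a_in ->]]]].
  exists l; intros n sn; apply cover_spec.
  destruct (rsum_true l a n sn) as [i [il ain]]; exists i; split; auto.
  destruct (a_in i il) as [t [_ ati]]; rewrite ati in ain; unfold rmul in ain.
  destruct (e i n); auto; rewrite andb_false_r in ain; discriminate.
Qed.

Section Transversal.

Variables (Idx : Type) (e : Idx -> R).
Hypothesis e_disjoint : forall i j n, e i n = true -> e j n = true -> i = j.

Definition linked (n m : nat) : Prop := exists i, e i n = true /\ e i m = true.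

(* The least point of each support, together with every point outside all supports. *)
Definition transversal : R :=
  fun n => if excluded_middle_informative (forall m, m < n -> ~ linked m n)
           then true else false.

Lemma linked_trans n m p : linked n m -> linked m p -> linked n p.
Proof.
  intros [i [ein eim]] [j [ejm ejp]]; exists i; split; auto.
  rewrite (e_disjoint i j m eim ejm); exact ejp.
Qed.

Lemma transversal_unique n m :
  transversal n = true -> transversal m = true -> linked n m -> n = m.
Proof.
  unfold transversal; intros tn tm [i [ein eim]].
  destruct excluded_middle_informative as [least_n|]; [|discriminate].
  destruct excluded_middle_informative as [least_m|]; [|discriminate].
  destruct (lt_eq_lt_dec n m) as [[lt|eq]|gt]; auto.
  - exfalso; apply (least_m n lt); exists i; auto.
  - exfalso; apply (least_n m gt); exists i; auto.
Qed.

Lemma transversal_spans n :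
  exists m, transversal m = true /\ (m = n \/ linked m n).
Proof.
  induction n as [n IH] using lt_wf_ind.
  destruct (transversal n) eqn:tn; [exists n; auto|].
  unfold transversal in tn; destruct excluded_middle_informative as [|not_least];
    [discriminate|].
  apply not_all_ex_not in not_least as [k not_least].
  apply imply_to_and in not_least as [kn link_kn]; apply NNPP in link_kn.
  destruct (IH k kn) as [m [tm [mk | link_mk]]]; exists m; split; auto.
  - subst m; auto.
  - right; apply (linked_trans m k n); auto.
Qed.

Lemma finsupp_cover_transversal l : finsupp (rmul (cover e l) transversal).
Proof.
  induction l as [|i l IH].
  - exists 0; reflexivity.
  - apply finsupp_below
      with (g := fun n => (e i n && transversal n) || rmul (cover e l) transversal n).
    + apply finsupp_orb; auto.
      apply finsupp_at_most_one; intros n m tn tm.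
      apply andb_prop in tn as [ein tn]; apply andb_prop in tm as [eim tm].
      apply transversal_unique; auto; exists i; auto.
    + intros n; unfold rmul, cover; simpl.
      destruct (e i n), (existsb _ l), (transversal n); auto.
Qed.

(* Every point is linked to, or is, a point of the transversal, so covering
   the transversal covers everything. *)
Lemma transversal_not_in_ideal (M : R -> Prop) :
  proper_ideal M ->
  (forall s, M s -> exists l, forall n, s n = true -> cover e l n = true) ->
  (forall i, M (e i)) -> ~ M transversal.
Proof.
  intros [M_ideal not_M1] M_below Me Mt; apply not_M1.
  destruct (M_below _ Mt) as [l t_le].
  apply (ideal_below M r1 (cover e l) M_ideal); [apply ideal_cover; auto|].
  intros n _; destruct (transversal_spans n) as [m [tm [<- | [i [eim ein]]]]]; auto.
  destruct (proj1 (cover_spec e l m) (t_le m tm)) as [j [jl ejm]].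
  apply cover_spec; exists j; split; auto.
  rewrite (e_disjoint j i m ejm eim); exact ein.
Qed.

End Transversal.

Lemma no_finite_cover_family (M : R -> Prop) {Idx : Type} (e : Idx -> R) :
  maximal_ideal M -> (forall f, finsupp f -> M f) ->
  (forall i j n, e i n = true -> e j n = true -> i = j) ->
  (forall i, M (e i)) ->
  (forall s, M s -> exists l, forall n, s n = true -> cover e l n = true) ->
  False.
Proof.
  intros M_max M_fin e_disjoint Me M_below.
  pose (a := transversal Idx e).
  assert (trace_finite : forall s, M s -> finsupp (rmul s a)).
  { intros s Ms; destruct (M_below s Ms) as [l s_le].
    apply (finsupp_below _ _ (finsupp_cover_transversal Idx e l)).
    intros n; unfold rmul; fold a; specialize (s_le n).
    destruct (s n), (a n), (cover e l n); simpl; intuition. }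
  assert (a_infinite : ~ finsupp a).
  { intros a_fin; apply (transversal_not_in_ideal Idx e e_disjoint M);
      [apply M_max | assumption | assumption | apply M_fin, a_fin]. }
  destruct (split_infinite a a_infinite) as [f [f_inf f'_inf]].
  destruct (maximal_ideal_prime M f M_max) as [Mf | Mf];
    [apply f_inf | apply f'_inf]; apply trace_finite, Mf.
Qed.

Theorem mainTheorem16 (M : R -> Prop) :
  maximal_ideal M -> (forall f, finsupp f -> M f) ->
  local_units M M /\ ~ enough_idempotents M.
Proof.
  intros M_max M_fin; split.
  - apply local_units_self, M_max.
  - intros [Idx [e [Me [_ [e_orth [left_sum _]]]]]].
    apply (no_finite_cover_family M e M_max M_fin).
    + apply orthogonal_disjoint, e_orth.
    + exact Me.
    + apply left_direct_sum_below_cover, left_sum.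
Qed.
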